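(* Consider the Data Revocation Game with negligible unlearning cost, with $d_i^{\max}=d^{\max}$ for all $i$ and $m_1<m_2<\dots<m_I$, where $m_i=(\xi_i\ell_i)^{-1}-\epsilon_i$. Then the game has a unique Nash equilibrium, described as follows. (i) If there is a user $j\in\mathcal I$ with $(I-j)d^{\max}\le m_j\le(I-j+1)d^{\max}$, then the unique equilibrium is $d_i^*=0$ for $i<j$, $d_j^*=(\xi_j\ell_j)^{-1}-(I-j)d^{\max}-\epsilon_j$, and $d_i^*=d^{\max}$ for $i>j$. (ii) Otherwise, with the conventions $m_0=-\infty$ and $m_{I+1}=+\infty$, there exists $j\in\{0,1,\dots,I\}$ with $m_j<(I-j)d^{\max}<m_{j+1}$, and the unique equilibrium is $d_i^*=0$ for $i\le j$ and $d_i^*=d^{\max}$ for $i>j$.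
   Context: Data Revocation Game with negligible unlearning cost: a finite set of users $\mathcal I=\{1,\dots,I\}$, $I\ge 2$, each with parameters $d_i^{\max}>0$, $\epsilon_i>0$, $\xi_i>0$, $\ell_i>0$. Each user chooses $d_i\in[0,d_i^{\max}]$, with payoff $U_i(d_i,\boldsymbol{d_{-i}})=\ln\big(\sum_{j\in\mathcal I}d_j+\epsilon_i\big)-\xi_i d_i\ell_i$. A Nash equilibrium is a profile $(d_i^* )$ with $d_i^*\in[0,d_i^{\max}]$ and $U_i(d_i^*,\boldsymbol{d_{-i}^*})\ge U_i(d_i,\boldsymbol{d_{-i}^*})$ for all $i$ and $d_i\in[0,d_i^{\max}]$. *)

(* concrete reals R. Users are indexed by 1..I (nat);
   strategy profiles are functions nat -> R (only indices 1..I matter). *)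
From Stdlib Require Import Reals List.
Import ListNotations.
Open Scope R_scope.

Definition total (I : nat) (d : nat -> R) : R :=
  fold_right Rplus 0 (map d (seq 1 I)).

Definition upd (d : nat -> R) (i : nat) (x : R) : nat -> R :=
  fun j => if Nat.eqb j i then x else d j.

Definition payoff (I : nat) (eps xi ell : nat -> R) (i : nat) (d : nat -> R) : R :=
  ln (total I d + eps i) - xi i * d i * ell i.

Definition is_NE (I : nat) (dmax eps xi ell : nat -> R) (d : nat -> R) : Prop :=
  forall i, (1 <= i <= I)%nat ->
    0 <= d i <= dmax i /\
    forall x, 0 <= x <= dmax i ->
      payoff I eps xi ell i (upd d i x) <= payoff I eps xi ell i d.

Definition mval (eps xi ell : nat -> R) (i : nat) : R := / (xi i * ell i) - eps i.

From Stdlib Require Import Reals List Lra Lia Classical FunctionalExtensionality.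
Open Scope R_scope.

(* User i's payoff ln (a + x) - c x is strictly concave in its own strategy x and
   peaks at x = 1/c - a, so a profile is an equilibrium iff it satisfies the KKT
   conditions: a user below the cap D faces a total of at least m_i, and a user
   investing anything faces a total of at most m_i. Two KKT profiles have the same
   total, since a larger total can only lower every strategy; as the m_i are strictly
   increasing, the profiles then agree at every user except possibly the single one
   with m_i equal to the total, where the common total forces agreement. The explicit
   profiles of cases (i) and (ii) satisfy the KKT conditions, which gives existence. *)

Lemma ln_sub_lt (y z : R) : 0 < y -> 0 < z -> y <> z -> ln y - ln z < (y - z) / z.
Proof.
  intros Hy Hz Hyz.
  assert (Hne : ln y - ln z <> 0) by (intro E; apply Hyz, ln_inv; lra).
  assert (E : exp (ln y - ln z) = y / z).
  { unfold Rminus. rewrite exp_plus, exp_Ropp, !exp_ln; [reflexivity | lra | lra]. }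
  pose proof (exp_ineq1 _ Hne) as H. rewrite E in H.
  replace ((y - z) / z) with (y / z - 1) by (field; lra). lra.
Qed.

Section ConcavePayoff.

Variables a c : R.
Hypothesis a_pos : 0 < a.
Hypothesis c_pos : 0 < c.

Lemma ln_sub_linear_increasing x y : 0 <= x -> x < y -> a + y <= / c -> ln (a + x) - c * x < ln (a + y) - c * y.
Proof.
  intros Hx Hxy Hy.
  pose proof (ln_sub_lt (a + x) (a + y) ltac:(lra) ltac:(lra) ltac:(lra)) as L.
  assert (Hcy : c * (a + y) <= 1).
  { rewrite <- (Rinv_r c) by lra. apply Rmult_le_compat_l; lra. }
  replace ((a + x - (a + y)) / (a + y)) with (- (y - x) * / (a + y)) in L by (field; lra).
  assert (Hu : (a + y) * / (a + y) = 1) by (field; lra).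
  assert (0 < / (a + y)) by (apply Rinv_0_lt_compat; lra).
  nra.
Qed.

Lemma ln_sub_linear_decreasing x y : 0 <= x -> x < y -> / c <= a + x -> ln (a + y) - c * y < ln (a + x) - c * x.
Proof.
  intros Hx Hxy Hy.
  pose proof (ln_sub_lt (a + y) (a + x) ltac:(lra) ltac:(lra) ltac:(lra)) as L.
  assert (Hcx : 1 <= c * (a + x)).
  { rewrite <- (Rinv_r c) by lra. apply Rmult_le_compat_l; lra. }
  replace ((a + y - (a + x)) / (a + x)) with ((y - x) * / (a + x)) in L by (field; lra).
  assert (Hu : (a + x) * / (a + x) = 1) by (field; lra).
  assert (0 < / (a + x)) by (apply Rinv_0_lt_compat; lra).
  nra.
Qed.

Lemma ln_sub_linear_argmax D x : 0 <= x <= D ->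
  (forall y, 0 <= y <= D -> ln (a + y) - c * y <= ln (a + x) - c * x) <->
  (x < D -> / c <= a + x) /\ (0 < x -> a + x <= / c).
Proof.
  intros Hx. split.
  - intros Hmax. split.
    + intros HxD. destruct (Rle_lt_dec (/ c) (a + x)) as [|Hlow]; [assumption | exfalso].
      set (y := Rmin D (/ c - a)).
      assert (Hy : x < y) by (apply Rmin_glb_lt; lra).
      assert (y <= D) by apply Rmin_l.
      assert (a + y <= / c) by (pose proof (Rmin_r D (/ c - a)); unfold y; lra).
      pose proof (ln_sub_linear_increasing x y ltac:(lra) Hy ltac:(lra)).
      pose proof (Hmax y ltac:(lra)). lra.
    + intros Hx0. destruct (Rle_lt_dec (a + x) (/ c)) as [|Hhigh]; [assumption | exfalso].
      set (y := Rmax 0 (/ c - a)).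
      assert (Hy : y < x) by (apply Rmax_lub_lt; lra).
      assert (0 <= y) by apply Rmax_l.
      assert (/ c <= a + y) by (pose proof (Rmax_r 0 (/ c - a)); unfold y; lra).
      pose proof (ln_sub_linear_decreasing y x ltac:(lra) Hy ltac:(lra)).
      pose proof (Hmax y ltac:(lra)). lra.
  - intros [Hup Hdown] y Hy.
    destruct (Rtotal_order y x) as [Hyx | [-> | Hxy]].
    + left. apply ln_sub_linear_increasing; try apply Hdown; lra.
    + lra.
    + left. apply ln_sub_linear_decreasing; try apply Hup; lra.
Qed.

End ConcavePayoff.

Lemma total_S I d : total (S I) d = total I d + d (S I).
Proof.
  unfold total. rewrite seq_S, map_app, fold_right_app. simpl.
  replace (1 + I)%nat with (S I) by lia.
  induction (map d (seq 1 I)) as [|x l IH]; simpl; lra.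
Qed.

Lemma total_ext I d e :
  (forall k, (1 <= k <= I)%nat -> d k = e k) -> total I d = total I e.
Proof.
  intros H. unfold total. f_equal. apply map_ext_in.
  intros k Hk. apply in_seq in Hk. apply H. lia.
Qed.

Lemma total_le I d e :
  (forall k, (1 <= k <= I)%nat -> d k <= e k) -> total I d <= total I e.
Proof.
  induction I as [|I IH]; intros H.
  - unfold total; simpl; lra.
  - rewrite !total_S. assert (d (S I) <= e (S I)) by (apply H; lia).
    assert (total I d <= total I e) by (apply IH; intros; apply H; lia). lra.
Qed.

Lemma total_const0 I : total I (fun _ => 0) = 0.
Proof. induction I as [|I IH]; [unfold total; simpl; lra | rewrite total_S, IH; lra]. Qed.

Lemma total_nonneg I d : (forall k, (1 <= k <= I)%nat -> 0 <= d k) -> 0 <= total I d.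
Proof. intros H. rewrite <- (total_const0 I). now apply total_le. Qed.

Lemma total_upd I d i x :
  (1 <= i <= I)%nat -> total I (upd d i x) = total I d - d i + x.
Proof.
  induction I as [|I IH]; intros Hi; [lia|].
  rewrite !total_S. destruct (Nat.eq_dec i (S I)) as [->|Hne].
  - rewrite (total_ext I (upd d (S I) x) d).
    + unfold upd. rewrite Nat.eqb_refl. lra.
    + intros k Hk. unfold upd. destruct (Nat.eqb_spec k (S I)); [lia | reflexivity].
  - rewrite IH by lia. unfold upd. destruct (Nat.eqb_spec (S I) i); [lia | lra].
Qed.

Lemma upd_id d i : upd d i (d i) = d.
Proof.
  apply functional_extensionality. intros k. unfold upd.
  destruct (Nat.eqb_spec k i) as [->|]; reflexivity.
Qed.

Definition step_profile (j : nat) (D : R) : nat -> R :=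
  fun k => if Nat.leb k j then 0 else D.

Lemma total_step_profile I j D :
  (j <= I)%nat -> total I (step_profile j D) = INR (I - j) * D.
Proof.
  induction I as [|I IH]; intros Hj.
  - unfold total; simpl; lra.
  - destruct (Nat.eq_dec j (S I)) as [->|Hne].
    + rewrite Nat.sub_diag, (total_ext _ _ (fun _ => 0)), total_const0; [simpl; lra|].
      intros k Hk. unfold step_profile. destruct (Nat.leb_spec k (S I)); [reflexivity | lia].
    + rewrite total_S, IH by lia. unfold step_profile.
      destruct (Nat.leb_spec (S I) j); [lia|].
      replace (S I - j)%nat with (S (I - j)) by lia. rewrite S_INR. lra.
Qed.

Lemma payoff_upd I eps xi ell i d x : (1 <= i <= I)%nat ->
  payoff I eps xi ell i (upd d i x) =
  ln (total I d - d i + eps i + x) - xi i * ell i * x.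
Proof.
  intros Hi. unfold payoff. rewrite total_upd by assumption.
  unfold upd. rewrite Nat.eqb_refl. f_equal; [f_equal; ring | ring].
Qed.

Definition kkt (I : nat) (D : R) (m d : nat -> R) : Prop :=
  forall i, (1 <= i <= I)%nat ->
    0 <= d i <= D /\
    (d i < D -> m i <= total I d) /\
    (0 < d i -> total I d <= m i).

Lemma best_response_iff I D eps xi ell d i :
  (forall k, (1 <= k <= I)%nat -> 0 <= d k <= D) ->
  (1 <= i <= I)%nat -> 0 < eps i -> 0 < xi i -> 0 < ell i ->
  (forall x, 0 <= x <= D -> payoff I eps xi ell i (upd d i x) <= payoff I eps xi ell i d) <->
  (d i < D -> mval eps xi ell i <= total I d) /\
  (0 < d i -> total I d <= mval eps xi ell i).
Proof.
  intros Hd Hi He Hx Hl.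
  assert (Hothers : 0 <= total I d - d i).
  { rewrite <- (Rplus_0_r (_ - _)), <- (total_upd I d i 0) by assumption.
    apply total_nonneg. intros k Hk. unfold upd.
    destruct (Nat.eqb k i); [lra | apply Hd; assumption]. }
  assert (Hself : payoff I eps xi ell i d =
                  ln (total I d - d i + eps i + d i) - xi i * ell i * d i).
  { rewrite <- payoff_upd, upd_id by assumption. reflexivity. }
  rewrite Hself. setoid_rewrite payoff_upd; [|assumption].
  rewrite (ln_sub_linear_argmax (total I d - d i + eps i) (xi i * ell i));
    [| lra | nra | apply Hd; assumption].
  unfold mval. split; intros [H1 H2]; split; intros H;
    [specialize (H1 H) | specialize (H2 H) | specialize (H1 H) | specialize (H2 H)]; lra.
Qed.

Lemma is_NE_iff_kkt I dmax D eps xi ell d :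
  (forall i, (1 <= i <= I)%nat -> dmax i = D) ->
  (forall i, (1 <= i <= I)%nat -> 0 < eps i /\ 0 < xi i /\ 0 < ell i) ->
  is_NE I dmax eps xi ell d <-> kkt I D (mval eps xi ell) d.
Proof.
  intros Hdmax Hpos.
  assert (Hbr : (forall k, (1 <= k <= I)%nat -> 0 <= d k <= D) ->
    forall i, (1 <= i <= I)%nat ->
    (forall x, 0 <= x <= D -> payoff I eps xi ell i (upd d i x) <= payoff I eps xi ell i d) <->
    (d i < D -> mval eps xi ell i <= total I d) /\
    (0 < d i -> total I d <= mval eps xi ell i)).
  { intros Hd i Hi. destruct (Hpos i Hi) as (He & Hx & Hl).
    now apply best_response_iff. }
  split.
  - intros HNE.
    assert (Hd : forall k, (1 <= k <= I)%nat -> 0 <= d k <= D).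
    { intros k Hk. rewrite <- (Hdmax k Hk). apply HNE, Hk. }
    intros i Hi. split; [now apply Hd|].
    apply (Hbr Hd i Hi). rewrite <- (Hdmax i Hi). apply HNE, Hi.
  - intros Hkkt.
    assert (Hd : forall k, (1 <= k <= I)%nat -> 0 <= d k <= D) by (intros k Hk; apply Hkkt, Hk).
    intros i Hi. rewrite (Hdmax i Hi). split; [now apply Hd|].
    apply (Hbr Hd i Hi), Hkkt, Hi.
Qed.

Section Thresholds.

Variables (I : nat) (D : R) (m : nat -> R).

Hypothesis m_incr : forall i, (1 <= i < I)%nat -> m i < m (S i).

Lemma m_lt i k : (1 <= i)%nat -> (i < k)%nat -> (k <= I)%nat -> m i < m k.
Proof.
  induction k as [|k IH]; intros H1 H2 H3; [lia|].
  destruct (Nat.eq_dec i k) as [->|Hne]; [apply m_incr; lia|].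
  assert (m i < m k) by (apply IH; lia).
  assert (m k < m (S k)) by (apply m_incr; lia). lra.
Qed.

Lemma kkt_zero d i : kkt I D m d -> (1 <= i <= I)%nat -> m i < total I d -> d i = 0.
Proof.
  intros Hkkt Hi Hlt. destruct (Hkkt i Hi) as (Hb & _ & Hpos).
  destruct (Rle_lt_dec (d i) 0) as [|H]; [lra|]. apply Hpos in H. lra.
Qed.

Lemma kkt_full d i : kkt I D m d -> (1 <= i <= I)%nat -> total I d < m i -> d i = D.
Proof.
  intros Hkkt Hi Hlt. destruct (Hkkt i Hi) as (Hb & Hfull & _).
  destruct (Rle_lt_dec D (d i)) as [|H]; [lra|]. apply Hfull in H. lra.
Qed.

Lemma kkt_total_le d d' : kkt I D m d -> kkt I D m d' -> total I d' <= total I d.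
Proof.
  intros Hkkt Hkkt'. destruct (Rle_lt_dec (total I d') (total I d)) as [|Hlt]; [assumption|].
  enough (total I d' <= total I d) by lra.
  apply total_le. intros k Hk.
  destruct (Hkkt k Hk) as (Hb & Hfull & _). destruct (Hkkt' k Hk) as (Hb' & _ & Hpos').
  destruct (Rle_lt_dec (d' k) 0) as [|H']; [lra|]. apply Hpos' in H'.
  destruct (Rle_lt_dec D (d k)) as [|H]; [lra|]. apply Hfull in H. lra.
Qed.

Lemma kkt_unique d d' : kkt I D m d -> kkt I D m d' ->
  forall i, (1 <= i <= I)%nat -> d i = d' i.
Proof.
  intros Hkkt Hkkt'.
  assert (HT : total I d' = total I d).
  { pose proof (kkt_total_le d d' Hkkt Hkkt'). pose proof (kkt_total_le d' d Hkkt' Hkkt). lra. }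
  assert (Hoff : forall k, (1 <= k <= I)%nat -> m k <> total I d -> d k = d' k).
  { intros k Hk Hne. destruct (Rtotal_order (m k) (total I d)) as [Hlt | [Heq | Hgt]].
    - rewrite (kkt_zero d k), (kkt_zero d' k); auto; lra.
    - contradiction.
    - rewrite (kkt_full d k), (kkt_full d' k); auto; lra. }
  intros i Hi. destruct (Req_dec (m i) (total I d)) as [Heq | Hne]; [|auto].
  assert (E : total I d' = total I (upd d i (d' i))).
  { apply total_ext. intros k Hk. unfold upd.
    destruct (Nat.eqb_spec k i) as [->|Hki]; [reflexivity|].
    symmetry. apply Hoff; [assumption|]. rewrite <- Heq.
    destruct (Nat.lt_total k i) as [Hl | [Hl | Hl]]; [| lia |].
    - pose proof (m_lt k i ltac:(lia) Hl ltac:(lia)). lra.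
    - pose proof (m_lt i k ltac:(lia) Hl ltac:(lia)). lra. }
  rewrite total_upd in E by assumption. lra.
Qed.

Lemma kkt_interior_profile j v : (1 <= j <= I)%nat ->
  INR (I - j) * D <= m j <= INR (I - j + 1) * D ->
  v = m j - INR (I - j) * D ->
  kkt I D m (fun i => if Nat.ltb i j then 0 else if Nat.eqb i j then v else D).
Proof.
  intros Hj Hmj Hv.
  rewrite plus_INR in Hmj. simpl INR in Hmj.
  assert (HT : total I (fun i => if Nat.ltb i j then 0 else if Nat.eqb i j then v else D) = m j).
  { rewrite (total_ext I _ (upd (step_profile j D) j v)).
    - rewrite total_upd, total_step_profile by lia. unfold step_profile.
      rewrite Nat.leb_refl. lra.
    - intros k Hk. unfold upd, step_profile.
      destruct (Nat.ltb_spec k j), (Nat.eqb_spec k j), (Nat.leb_spec k j); auto; lia. }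
  intros i Hi. rewrite HT.
  destruct (Nat.ltb_spec i j).
  - pose proof (m_lt i j ltac:(lia) ltac:(lia) ltac:(lia)). repeat split; intros; lra.
  - destruct (Nat.eqb_spec i j) as [->|].
    + repeat split; intros; lra.
    + pose proof (m_lt j i ltac:(lia) ltac:(lia) ltac:(lia)). repeat split; intros; lra.
Qed.

Hypothesis D_nonneg : 0 <= D.

Lemma kkt_step_profile j : (j <= I)%nat ->
  (j = 0%nat \/ m j < INR (I - j) * D) ->
  (j = I \/ INR (I - j) * D < m (S j)) ->
  kkt I D m (step_profile j D).
Proof.
  intros Hj Hlow Hhigh i Hi.
  rewrite total_step_profile by assumption. unfold step_profile.
  destruct (Nat.leb_spec i j).
  - destruct Hlow as [->|Hlow]; [lia|].
    assert (m i <= m j).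
    { destruct (Nat.eq_dec i j) as [->|]; [lra|]. left. apply m_lt; lia. }
    repeat split; intros; lra.
  - destruct Hhigh as [->|Hhigh]; [lia|].
    assert (m (S j) <= m i).
    { destruct (Nat.eq_dec i (S j)) as [->|]; [lra|]. left. apply m_lt; lia. }
    repeat split; intros; lra.
Qed.

End Thresholds.

(* Discrete intermediate value theorem: the largest [j <= n] with [m j] below the
   step height does the job, since [m (S j)] cannot land in the gap of case (i). *)
Lemma step_index_exists I D (m : nat -> R) :
  (~ exists j, (1 <= j <= I)%nat /\ INR (I - j) * D <= m j <= INR (I - j + 1) * D) ->
  forall n, (n <= I)%nat -> exists j, (j <= n)%nat /\
    (j = 0%nat \/ m j < INR (I - j) * D) /\
    (j = n \/ INR (I - j) * D < m (S j)).
Proof.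
  intros Hgap n. induction n as [|n IH]; intros Hn.
  - exists 0%nat. repeat split; auto.
  - destruct IH as (j & Hj & Hlow & [->|Hhigh]); [lia| |].
    + destruct (Rlt_le_dec (INR (I - n) * D) (m (S n))) as [|Hle].
      * exists n. repeat split; auto.
      * exists (S n). repeat split; auto. right.
        destruct (Rlt_le_dec (m (S n)) (INR (I - S n) * D)) as [|Hge]; [assumption|].
        exfalso. apply Hgap. exists (S n). split; [lia|].
        replace (I - S n + 1)%nat with (I - n)%nat by lia. lra.
    + exists j. repeat split; auto.
Qed.

Theorem theorem2 (I : nat) (dmax : nat -> R) (D : R) (eps xi ell : nat -> R) :
  (2 <= I)%nat ->
  0 < D ->
  (forall i, (1 <= i <= I)%nat -> dmax i = D) ->
  (forall i, (1 <= i <= I)%nat -> 0 < eps i /\ 0 < xi i /\ 0 < ell i) ->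
  (forall i, (1 <= i < I)%nat -> mval eps xi ell i < mval eps xi ell (S i)) ->
  ((exists d, is_NE I dmax eps xi ell d) /\
   (forall d d', is_NE I dmax eps xi ell d -> is_NE I dmax eps xi ell d' ->
      forall i, (1 <= i <= I)%nat -> d i = d' i)) /\
  (forall j, (1 <= j <= I)%nat ->
     INR (I - j) * D <= mval eps xi ell j <= INR (I - j + 1) * D ->
     forall d, is_NE I dmax eps xi ell d ->
       forall i, (1 <= i <= I)%nat ->
         d i = (if Nat.ltb i j then 0
                else if Nat.eqb i j then / (xi j * ell j) - INR (I - j) * D - eps j
                else D)) /\
  ((~ exists j, (1 <= j <= I)%nat /\
        INR (I - j) * D <= mval eps xi ell j <= INR (I - j + 1) * D) ->
   exists j, (j <= I)%nat /\
     (j = 0%nat \/ mval eps xi ell j < INR (I - j) * D) /\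
     (j = I \/ INR (I - j) * D < mval eps xi ell (S j)) /\
     forall d, is_NE I dmax eps xi ell d ->
       forall i, (1 <= i <= I)%nat ->
         d i = (if Nat.leb i j then 0 else D)).
Proof.
  intros _ HD Hdmax Hpos Hm.
  assert (HNE : forall d, is_NE I dmax eps xi ell d <-> kkt I D (mval eps xi ell) d)
    by (intros d; now apply is_NE_iff_kkt).
  assert (Hunique : forall d p, is_NE I dmax eps xi ell d -> kkt I D (mval eps xi ell) p ->
            forall i, (1 <= i <= I)%nat -> d i = p i).
  { intros d p Hd Hp. apply (kkt_unique I D _ Hm); [apply HNE | ]; assumption. }
  assert (Hcase_i : forall j, (1 <= j <= I)%nat ->
     INR (I - j) * D <= mval eps xi ell j <= INR (I - j + 1) * D ->
     kkt I D (mval eps xi ell) (fun i => if Nat.ltb i j then 0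
       else if Nat.eqb i j then / (xi j * ell j) - INR (I - j) * D - eps j else D)).
  { intros j Hj Hmj. apply kkt_interior_profile; [assumption.. | unfold mval; ring]. }
  assert (Hcase_ii : (~ exists j, (1 <= j <= I)%nat /\
        INR (I - j) * D <= mval eps xi ell j <= INR (I - j + 1) * D) ->
     exists j, (j <= I)%nat /\
     (j = 0%nat \/ mval eps xi ell j < INR (I - j) * D) /\
     (j = I \/ INR (I - j) * D < mval eps xi ell (S j)) /\
     kkt I D (mval eps xi ell) (step_profile j D)).
  { intros Hgap. destruct (step_index_exists I D _ Hgap I (le_n I)) as (j & Hj & Hlow & Hhigh).
    exists j. do 3 (split; [assumption |]). apply kkt_step_profile; auto; lra. }
  split; [split | split].
  - destruct (classic (exists j, (1 <= j <= I)%nat /\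
        INR (I - j) * D <= mval eps xi ell j <= INR (I - j + 1) * D)) as [(j & Hj & Hmj) | Hgap].
    + eexists. apply HNE, (Hcase_i j Hj Hmj).
    + destruct (Hcase_ii Hgap) as (j & _ & _ & _ & Hkkt). exists (step_profile j D). now apply HNE.
  - intros d d' Hd Hd'. apply (kkt_unique I D _ Hm); apply HNE; assumption.
  - intros j Hj Hmj d Hd. exact (Hunique d _ Hd (Hcase_i j Hj Hmj)).
  - intros Hgap. destruct (Hcase_ii Hgap) as (j & Hj & Hlow & Hhigh & Hkkt).
    exists j. do 3 (split; [assumption |]). intros d Hd. exact (Hunique d _ Hd Hkkt).
Qed.
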